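(* Let $L>0$, let $\bar c:[0,L]\to(0,\infty)$ and $a,d:[0,L]\to\mathbb{R}$ be continuous, and let $R_0,R_L\in\mathbb{R}$ with $R_0R_L\neq 0$. For $\delta\in\{1,a,d\}$ define $I_{\bar c/\delta}(x)=\int_0^x \frac{\delta(y)}{\bar c(y)}\,dy$, writing $I_{\bar c}=I_{\bar c/1}$. For $s\in\mathbb{C}$ consider the boundary value problem for $\hat W=(\hat w_1,\hat w_2)^T:[0,L]\to\mathbb{C}^2$: $$s\hat w_1-\bar c(x)\hat w_1'=a(x)\hat w_1,\qquad s\hat w_2+\bar c(x)\hat w_2'=d(x)\hat w_2,\qquad x\in[0,L],$$ $$\hat w_2(0)=R_0\,\hat w_1(0),\qquad \hat w_1(L)=R_L\,\hat w_2(L).$$ Then this problem has a nontrivial solution if and only if $s=s_n$ for some $n\in\mathbb{Z}$, where $$s_n=\frac{\ln(R_0R_L)+I_{\bar c/d}(L)+I_{\bar c/a}(L)+2\pi n i}{2\,I_{\bar c}(L)},$$ and $\ln(R_0R_L)$ denotes any fixed complex logarithm of the nonzero real number $R_0R_L$. *)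

From Stdlib Require Import Reals ZArith.
From Coquelicot Require Export Coquelicot.
Open Scope R_scope.

Definition cont_on_0L (L : R) (f : R -> R) : Prop :=
  forall x, 0 <= x <= L ->
    filterlim f (within (fun y => 0 <= y <= L) (locally x)) (locally (f x)).

Definition ccont_on_0L (L : R) (f : R -> C) : Prop :=
  forall x, 0 <= x <= L ->
    filterlim f (within (fun y => 0 <= y <= L) (locally x)) (locally (f x)).

Definition cexp (z : C) : C :=
  (exp (Re z) * cos (Im z), exp (Re z) * sin (Im z)).

Definition Iw (cbar delta : R -> R) (x : R) : R :=
  RInt (fun y => delta y / cbar y) 0 x.

Definition is_solution (L : R) (cbar a d : R -> R) (R0 RL : R) (s : C)
    (w1 w2 : R -> C) : Prop :=
  ccont_on_0L L w1 /\ ccont_on_0L L w2 /\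
  (forall x, 0 < x < L ->
     exists w1' w2' : C,
       is_derive w1 x w1' /\ is_derive w2 x w2' /\
       (s * w1 x - RtoC (cbar x) * w1' = RtoC (a x) * w1 x)%C /\
       (s * w2 x + RtoC (cbar x) * w2' = RtoC (d x) * w2 x)%C) /\
  w2 0 = (RtoC R0 * w1 0)%C /\
  w1 L = (RtoC RL * w2 L)%C.

Definition nontrivial (L : R) (w1 w2 : R -> C) : Prop :=
  exists x, 0 <= x <= L /\ (w1 x <> 0%C \/ w2 x <> 0%C).

(* On (0,L) the two equations decouple into the scalar linear ODEs
   w1' = ((s - a)/cbar) w1 and w2' = ((d - s)/cbar) w2.  Differentiating w e^(-phase)
   shows that every solution is w1 = w1(0) e^phase1, w2 = w2(0) e^phase2 with
   phase1 = s I_cbar - I_(cbar/a) and phase2 = I_(cbar/d) - s I_cbar.  The condition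
   at 0 gives w2(0) = R0 w1(0), so a nontrivial solution has w1(0) <> 0, and the
   condition at L then holds iff e^phase1(L) = R0 RL e^phase2(L) = e^(ln(R0 RL) + phase2(L)),
   i.e. iff phase1(L) - phase2(L) = ln(R0 RL) + 2 pi i n for some integer n; this
   equation is linear in s. *)

From Stdlib Require Import Reals ZArith Lra.
From Coquelicot Require Import Coquelicot.
Open Scope R_scope.

Lemma is_derive_eq (f : R -> R) (x l l' : R) :
  is_derive f x l -> l = l' -> is_derive f x l'.
Proof. now intros H <-. Qed.

Lemma is_derive_Ceq (f : R -> C) (x : R) (l l' : C) :
  is_derive f x l -> l = l' -> is_derive f x l'.
Proof. now intros H <-. Qed.

Lemma is_derive_complex_iff (f : R -> C) (x : R) (l : C) :
  is_derive f x l <->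
  is_derive (fun t => fst (f t)) x (fst l) /\ is_derive (fun t => snd (f t)) x (snd l).
Proof.
  split.
  - intros H. split.
    + apply (@filterdiff_comp _ _ C_R_NormedModule _ _ _ f fst _ fst H).
      apply filterdiff_linear, is_linear_fst.
    + apply (@filterdiff_comp _ _ C_R_NormedModule _ _ _ f snd _ snd H).
      apply filterdiff_linear, is_linear_snd.
  - intros [H1 H2].
    apply (filterdiff_ext (fun y => (fst (f y), snd (f y)))).
    { intros y. now destruct (f y). }
    apply (filterdiff_comp_2 _ _ pair _ _ pair H1 H2).
    apply filterdiff_linear, (is_linear_ext (fun t => t)).
    { now intros []. }
    apply is_linear_id.
Qed.

Lemma continuous_complex_iff (f : R -> C) (x : R) :
  continuous f x <->
  continuous (fun t => fst (f t)) x /\ continuous (fun t => snd (f t)) x.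
Proof.
  split.
  - intros H. split; apply (continuous_comp f); trivial; destruct (f x).
    + apply continuous_fst.
    + apply continuous_snd.
  - intros [H1 H2].
    apply (continuous_ext (fun t => (fst (f t), snd (f t)))).
    { intros t. now destruct (f t). }
    apply (continuous_comp_2 _ _ pair x H1 H2).
    apply (continuous_ext (fun p => p)); [now intros [] | apply continuous_id].
Qed.

Lemma continuous_Cmult (f g : R -> C) (x : R) :
  continuous f x -> continuous g x -> continuous (fun t => (f t * g t)%C) x.
Proof.
  rewrite !continuous_complex_iff. intros [F1 F2] [G1 G2]. simpl. split.
  - apply (continuous_minus (V:=R_NormedModule));
      apply (continuous_mult (K:=R_AbsRing)); assumption.
  - apply (continuous_plus (V:=R_NormedModule));
      apply (continuous_mult (K:=R_AbsRing)); assumption.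
Qed.

Lemma is_derive_Cmult (f g : R -> C) (x : R) (df dg : C) :
  is_derive f x df -> is_derive g x dg ->
  is_derive (fun t => (f t * g t)%C) x (df * g x + f x * dg)%C.
Proof.
  rewrite !is_derive_complex_iff. intros [F1 F2] [G1 G2]. simpl.
  pose proof (fun p q dp dq Hp Hq => is_derive_mult p q x dp dq Hp Hq Rmult_comm) as Dmult.
  split; eapply is_derive_eq.
  - apply (is_derive_minus (fun t => fst (f t) * fst (g t)) (fun t => snd (f t) * snd (g t)));
      apply Dmult; eassumption.
  - cbn. ring.
  - apply (is_derive_plus (fun t => fst (f t) * snd (g t)) (fun t => snd (f t) * fst (g t)));
      apply Dmult; eassumption.
  - cbn. ring.
Qed.

Lemma is_derive_Cminus (f g : R -> C) (x : R) (df dg : C) :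
  is_derive f x df -> is_derive g x dg -> is_derive (fun t => (f t - g t)%C) x (df - dg)%C.
Proof. exact (is_derive_minus f g x df dg). Qed.

Lemma is_derive_RtoC (f : R -> R) (x l : R) :
  is_derive f x l -> is_derive (fun t => RtoC (f t)) x (RtoC l).
Proof. intros H. apply is_derive_complex_iff. split; [exact H | apply (is_derive_const 0)]. Qed.

Lemma is_derive_Cscal_RtoC (c : C) (f : R -> R) (x l : R) :
  is_derive f x l -> is_derive (fun t => (c * RtoC (f t))%C) x (c * RtoC l)%C.
Proof.
  intros H. eapply is_derive_Ceq.
  - apply (is_derive_Cmult (fun _ => c) _ x (RtoC 0)).
    + apply (is_derive_const (V:=C_R_NormedModule)).
    + apply is_derive_RtoC, H.
  - cbv beta. ring.
Qed.

Lemma is_derive_cexp (u : R -> C) (x : R) (l : C) :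
  is_derive u x l -> is_derive (fun t => cexp (u t)) x (l * cexp (u x))%C.
Proof.
  rewrite !is_derive_complex_iff. intros [U1 U2]. unfold cexp. simpl.
  assert (E : is_derive (fun t => exp (fst (u t))) x (fst l * exp (fst (u x)))).
  { apply (is_derive_comp exp), U1. apply is_derive_exp. }
  split; eapply is_derive_eq.
  - apply (is_derive_mult (fun t => exp (fst (u t))) (fun t => cos (snd (u t))));
      [exact E | | apply Rmult_comm].
    apply (is_derive_comp cos), U2. apply is_derive_cos.
  - cbn; unfold Re, Im. ring.
  - apply (is_derive_mult (fun t => exp (fst (u t))) (fun t => sin (snd (u t))));
      [exact E | | apply Rmult_comm].
    apply (is_derive_comp sin), U2. apply is_derive_sin.
  - cbn; unfold Re, Im. ring.
Qed.

Lemma cexp_add (z w : C) : cexp (z + w) = (cexp z * cexp w)%C.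
Proof.
  destruct z as [z1 z2], w as [w1 w2]. unfold cexp. simpl.
  rewrite exp_plus, cos_plus, sin_plus. apply injective_projections; simpl; ring.
Qed.

Lemma cexp_0 : cexp 0 = 1.
Proof. unfold cexp. simpl. rewrite exp_0, cos_0, sin_0. apply injective_projections; simpl; ring. Qed.

Lemma cexp_opp_mul (z : C) : (cexp (- z) * cexp z)%C = 1.
Proof. rewrite <- cexp_add, <- cexp_0. f_equal. ring. Qed.

Lemma cexp_2PI_Ci (n : Z) : cexp (RtoC (2 * PI * IZR n) * Ci) = 1.
Proof.
  assert (Hs : sin (IZR n * PI) = 0) by (apply sin_eq_0_1; eauto).
  unfold cexp. simpl.
  replace (2 * PI * IZR n * 0 - 0 * 1) with 0 by ring.
  replace (2 * PI * IZR n * 1 + 0 * 0) with (2 * (IZR n * PI)) by ring.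
  rewrite exp_0, cos_2a_sin, sin_2a, Hs. apply injective_projections; simpl; ring.
Qed.

Lemma cexp_eq_1 (z : C) : cexp z = 1 -> exists n : Z, z = (RtoC (2 * PI * IZR n) * Ci)%C.
Proof.
  destruct z as [r t]. unfold cexp. simpl. intros H.
  assert (H1 : exp r * cos t = 1) by (injection H; auto).
  assert (H2 : exp r * sin t = 0) by (injection H; auto).
  assert (Hs : sin t = 0) by (destruct (Rmult_integral _ _ H2); [pose proof (exp_pos r)|]; lra).
  assert (Hc : cos t = 1).
  { pose proof (sin2_cos2 t) as Hsc. unfold Rsqr in Hsc. rewrite Hs in Hsc.
    pose proof (exp_pos r). nra. }
  assert (Hr : r = 0).
  { apply exp_inv. rewrite exp_0, <- H1, Hc. ring. }
  destruct (sin_eq_0_0 t Hs) as [k Hk].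
  destruct (Zeven_odd_dec k) as [Hev | Hod].
  - destruct (Zeven_ex k Hev) as [m Hm]. exists m. subst.
    rewrite mult_IZR. apply injective_projections; simpl; ring.
  - exfalso. destruct (Zodd_ex k Hod) as [m Hm]. subst k.
    rewrite plus_IZR, mult_IZR in Hk.
    assert (Hsm : sin (IZR m * PI) = 0) by (apply sin_eq_0_1; eauto).
    replace t with (2 * (IZR m * PI) + PI) in Hc by (rewrite Hk; simpl; ring).
    rewrite neg_cos, cos_2a_sin, Hsm in Hc. lra.
Qed.

Lemma cexp_eq_cexp (z w : C) :
  cexp z = cexp w <-> exists n : Z, z = (w + RtoC (2 * PI * IZR n) * Ci)%C.
Proof.
  split.
  - intros H. destruct (cexp_eq_1 (z - w)) as [n Hn].
    + rewrite <- (cexp_opp_mul w), <- H, <- cexp_add. f_equal. ring.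
    + exists n. rewrite <- Hn. ring.
  - intros [n ->]. rewrite cexp_add, cexp_2PI_Ci. ring.
Qed.

(* Functions given on [0, L] are extended to all of R by composition with [clamp L],
   so that Coquelicot's [continuous], [is_derive] and [RInt] can be used up to the
   endpoints. *)
Definition clamp (L y : R) : R := Rmax 0 (Rmin L y).

Lemma clamp_in (L y : R) : 0 <= L -> 0 <= clamp L y <= L.
Proof. intros. unfold clamp, Rmax, Rmin. repeat destruct Rle_dec; lra. Qed.

Lemma clamp_id (L y : R) : 0 <= y <= L -> clamp L y = y.
Proof. intros. unfold clamp, Rmax, Rmin. repeat destruct Rle_dec; lra. Qed.

Lemma continuous_clamp_comp {U : UniformSpace} (L : R) (f : R -> U) :
  0 <= L ->
  (forall x, 0 <= x <= L ->
     filterlim f (within (fun y => 0 <= y <= L) (locally x)) (locally (f x))) ->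
  forall x, continuous (fun y => f (clamp L y)) x.
Proof.
  intros HL Hf x.
  apply (filterlim_comp _ _ _ (clamp L) f _ (within (fun y => 0 <= y <= L) (locally (clamp L x)))).
  - intros P [eps HP]. exists eps. intros y Hy. apply HP; [| apply clamp_in; exact HL].
    change (Rabs (clamp L y - clamp L x) < eps). change (Rabs (y - x) < eps) in Hy.
    unfold clamp, Rmax, Rmin in *. repeat destruct Rle_dec; split_Rabs; lra.
  - apply Hf, clamp_in, HL.
Qed.

Lemma is_derive_clamp_comp {V : NormedModule R_AbsRing} (L : R) (f : R -> V) (x : R) (l : V) :
  0 < x < L -> is_derive f x l -> is_derive (fun y => f (clamp L y)) x l.
Proof.
  intros Hx. apply is_derive_ext_loc.
  apply (locally_interval _ x 0 L); [simpl; lra .. |].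
  intros y Hy0 HyL. simpl in *. rewrite clamp_id; [reflexivity | lra].
Qed.

Lemma is_derive_zero_const (f : R -> R) (L : R) :
  (forall x, continuous f x) -> (forall x, 0 < x < L -> is_derive f x 0) ->
  forall x y, 0 <= x <= L -> 0 <= y <= L -> f x = f y.
Proof.
  intros Hc Hd x y Hx Hy.
  destruct (MVT_gen f x y (fun _ => 0)) as [c [_ E]].
  - intros z Hz. apply Hd. unfold Rmin, Rmax in Hz. destruct Rle_dec; lra.
  - intros z _. apply continuity_pt_filterlim, Hc.
  - lra.
Qed.

Lemma is_derive_zero_const_C (h : R -> C) (L : R) :
  (forall x, continuous h x) -> (forall x, 0 < x < L -> is_derive h x (RtoC 0)) ->
  forall x y, 0 <= x <= L -> 0 <= y <= L -> h x = h y.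
Proof.
  intros Hc Hd x y Hx Hy.
  apply injective_projections; [apply (is_derive_zero_const (fun t => fst (h t)) L) |
                                apply (is_derive_zero_const (fun t => snd (h t)) L)]; trivial.
  - intros z. apply continuous_complex_iff, Hc.
  - intros z Hz. apply (is_derive_complex_iff h z (RtoC 0)), Hd, Hz.
  - intros z. apply continuous_complex_iff, Hc.
  - intros z Hz. apply (is_derive_complex_iff h z (RtoC 0)), Hd, Hz.
Qed.

Definition prim (L : R) (g : R -> R) (x : R) : R := RInt (fun y => g (clamp L y)) 0 x.

Section Primitive.

Variables (L : R) (g : R -> R).
Hypothesis HL : 0 <= L.
Hypothesis Hg : forall x, continuous (fun y => g (clamp L y)) x.

Lemma is_derive_prim (x : R) : is_derive (prim L g) x (g (clamp L x)).
Proof.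
  apply (is_derive_RInt (fun y => g (clamp L y)) (prim L g) 0 x).
  - apply filter_forall. intros b. apply (RInt_correct (V:=R_CompleteNormedModule)).
    apply ex_RInt_continuous. intros. apply Hg.
  - apply Hg.
Qed.

Lemma prim_0 : prim L g 0 = 0.
Proof. apply (RInt_point (V:=R_CompleteNormedModule)). Qed.

Lemma prim_L : prim L g L = RInt g 0 L.
Proof.
  apply RInt_ext. rewrite Rmin_left, Rmax_right by exact HL.
  intros y Hy. apply f_equal, clamp_id. lra.
Qed.

Lemma prim_L_gt_0 : 0 < L -> (forall y, 0 < y < L -> 0 < g y) -> 0 < prim L g L.
Proof.
  intros HL' Hpos. apply RInt_gt_0; [exact HL' | | intros; apply Hg].
  intros y Hy. rewrite clamp_id by lra. apply Hpos, Hy.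
Qed.

End Primitive.

Lemma continuous_clamp_div (L : R) (f c : R -> R) :
  0 <= L -> cont_on_0L L f -> cont_on_0L L c -> (forall y, 0 <= y <= L -> c y <> 0) ->
  forall x, continuous (fun y => f (clamp L y) / c (clamp L y)) x.
Proof.
  intros HL Hf Hc Hc0 x.
  apply (continuous_mult (K:=R_AbsRing) (fun y => f (clamp L y)) (fun y => / c (clamp L y))).
  - apply continuous_clamp_comp; assumption.
  - apply continuous_Rinv_comp.
    + apply continuous_clamp_comp; assumption.
    + apply Hc0, clamp_in, HL.
Qed.

Lemma ccont_on_0L_of_is_derive (L : R) (w : R -> C) :
  (forall x, exists l, is_derive w x l) -> ccont_on_0L L w.
Proof.
  intros H x _. apply (filterlim_filter_le_1 _ (filter_le_within _)).
  destruct (H x) as [l Hl]. apply (ex_derive_continuous (V:=C_R_NormedModule)). now exists l.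
Qed.

Lemma linear_ode_exp_form (L : R) (w u k : R -> C) :
  0 < L -> ccont_on_0L L w ->
  (forall x, is_derive u x (k x)) -> u 0 = 0 ->
  (forall x, 0 < x < L -> is_derive w x (k x * w x)%C) ->
  forall y, 0 <= y <= L -> w y = (w 0 * cexp (u y))%C.
Proof.
  intros HL Hw Hu Hu0 Hode.
  set (h t := (w (clamp L t) * cexp (- u t))%C).
  assert (Hdu : forall x, is_derive (fun t => cexp (- u t)) x (- k x * cexp (- u x))%C).
  { intros x. apply is_derive_cexp, (is_derive_opp u), Hu. }
  assert (Hh0 : forall x, 0 < x < L -> is_derive h x (RtoC 0)).
  { intros x Hx.
    pose proof (is_derive_Cmult _ _ x _ _
                  (is_derive_clamp_comp L w x _ Hx (Hode x Hx)) (Hdu x)) as D.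
    cbv beta in D. rewrite clamp_id in D by lra.
    replace (k x * w x * cexp (- u x) + w x * (- k x * cexp (- u x)))%C with (RtoC 0) in D by ring.
    exact D. }
  assert (Hhc : forall x, continuous h x).
  { intros x. apply continuous_Cmult.
    - apply (continuous_clamp_comp L w); [lra | exact Hw].
    - apply (ex_derive_continuous (V:=C_R_NormedModule)). eexists. apply Hdu. }
  intros y Hy.
  assert (Hhy : h y = w 0).
  { rewrite (is_derive_zero_const_C h L Hhc Hh0 y 0 Hy) by lra.
    unfold h. rewrite clamp_id, Hu0 by lra.
    replace (- RtoC 0)%C with (RtoC 0) by ring. rewrite cexp_0. ring. }
  rewrite <- Hhy. unfold h. rewrite clamp_id by lra.
  rewrite <- Cmult_assoc, cexp_opp_mul. ring.
Qed.

Lemma transport_fwd_iff (s w w' : C) (c a : R) : c <> 0 ->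
  (s * w - RtoC c * w' = RtoC a * w)%C <-> w' = ((s * RtoC (1 / c) - RtoC (a / c)) * w)%C.
Proof.
  intros Hc. assert (Hc' : RtoC c <> 0) by (intros H; injection H; auto).
  rewrite !RtoC_div by exact Hc.
  split; intros E.
  - replace w' with (RtoC c * w' / RtoC c)%C by (field; exact Hc').
    replace (RtoC c * w')%C with (s * w - RtoC a * w)%C by (rewrite <- E; ring).
    field. exact Hc'.
  - subst w'. field. exact Hc'.
Qed.

Lemma transport_bwd_iff (s w w' : C) (c d : R) : c <> 0 ->
  (s * w + RtoC c * w' = RtoC d * w)%C <-> w' = ((RtoC (d / c) - s * RtoC (1 / c)) * w)%C.
Proof.
  intros Hc. assert (Hc' : RtoC c <> 0) by (intros H; injection H; auto).
  rewrite !RtoC_div by exact Hc.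
  split; intros E.
  - replace w' with (RtoC c * w' / RtoC c)%C by (field; exact Hc').
    replace (RtoC c * w')%C with (RtoC d * w - s * w)%C by (rewrite <- E; ring).
    field. exact Hc'.
  - subst w'. field. exact Hc'.
Qed.

Section BoundaryValueProblem.

Variables (L : R) (cbar a d : R -> R) (R0 RL : R) (s : C).
Hypothesis HL : 0 < L.
Hypothesis Hcbar_pos : forall x, 0 <= x <= L -> 0 < cbar x.
Hypothesis Hcbar : cont_on_0L L cbar.
Hypothesis Ha : cont_on_0L L a.
Hypothesis Hd : cont_on_0L L d.

Definition Iclamp (delta : R -> R) : R -> R := prim L (fun y => delta y / cbar y).

Lemma continuous_ratio (delta : R -> R) :
  cont_on_0L L delta -> forall x, continuous (fun y => delta (clamp L y) / cbar (clamp L y)) x.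
Proof.
  intros Hdelta. apply continuous_clamp_div; [lra | exact Hdelta | exact Hcbar |].
  intros y Hy. specialize (Hcbar_pos y Hy). lra.
Qed.

Lemma is_derive_Iclamp (delta : R -> R) (x : R) : cont_on_0L L delta ->
  is_derive (Iclamp delta) x (delta (clamp L x) / cbar (clamp L x)).
Proof.
  intros Hdelta. apply (is_derive_prim L (fun y => delta y / cbar y)).
  apply continuous_ratio, Hdelta.
Qed.

Lemma cont_on_0L_1 : cont_on_0L L (fun _ => 1).
Proof. intros y _. apply filterlim_const. Qed.

Definition phase1 (t : R) : C := (s * RtoC (Iclamp (fun _ => 1) t) - RtoC (Iclamp a t))%C.
Definition phase2 (t : R) : C := (RtoC (Iclamp d t) - s * RtoC (Iclamp (fun _ => 1) t))%C.

Lemma is_derive_phase1 (x : R) :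
  is_derive phase1 x
    (s * RtoC (1 / cbar (clamp L x)) - RtoC (a (clamp L x) / cbar (clamp L x)))%C.
Proof.
  apply is_derive_Cminus.
  - apply is_derive_Cscal_RtoC, (is_derive_Iclamp (fun _ => 1)), cont_on_0L_1.
  - apply is_derive_RtoC, is_derive_Iclamp, Ha.
Qed.

Lemma is_derive_phase2 (x : R) :
  is_derive phase2 x
    (RtoC (d (clamp L x) / cbar (clamp L x)) - s * RtoC (1 / cbar (clamp L x)))%C.
Proof.
  apply is_derive_Cminus.
  - apply is_derive_RtoC, is_derive_Iclamp, Hd.
  - apply is_derive_Cscal_RtoC, (is_derive_Iclamp (fun _ => 1)), cont_on_0L_1.
Qed.

Lemma phase1_0 : phase1 0 = 0.
Proof. unfold phase1, Iclamp. rewrite !prim_0. ring. Qed.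

Lemma phase2_0 : phase2 0 = 0.
Proof. unfold phase2, Iclamp. rewrite !prim_0. ring. Qed.

Lemma Iclamp_L (delta : R -> R) : Iclamp delta L = Iw cbar delta L.
Proof. unfold Iclamp, Iw. apply (prim_L L (fun y => delta y / cbar y)). lra. Qed.

Lemma Iw_1_pos : 0 < Iw cbar (fun _ => 1) L.
Proof.
  rewrite <- Iclamp_L. apply (prim_L_gt_0 L (fun y => 1 / cbar y)); [| exact HL |].
  - apply (continuous_ratio (fun _ => 1)), cont_on_0L_1.
  - intros y Hy. specialize (Hcbar_pos y). apply Rdiv_lt_0_compat; lra.
Qed.

Lemma solution_exp_form (w1 w2 : R -> C) :
  is_solution L cbar a d R0 RL s w1 w2 ->
  forall y, 0 <= y <= L ->
  w1 y = (w1 0 * cexp (phase1 y))%C /\ w2 y = (w2 0 * cexp (phase2 y))%C.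
Proof.
  intros (Hw1 & Hw2 & Hode & _ & _) y Hy. split.
  - apply (linear_ode_exp_form L w1 phase1 _ HL Hw1 is_derive_phase1 phase1_0); [| exact Hy].
    intros x Hx. cbv beta. destruct (Hode x Hx) as (w1' & w2' & D1 & _ & E1 & _).
    rewrite clamp_id by lra.
    apply transport_fwd_iff in E1; [| specialize (Hcbar_pos x); lra].
    rewrite <- E1. exact D1.
  - apply (linear_ode_exp_form L w2 phase2 _ HL Hw2 is_derive_phase2 phase2_0); [| exact Hy].
    intros x Hx. cbv beta. destruct (Hode x Hx) as (w1' & w2' & _ & D2 & _ & E2).
    rewrite clamp_id by lra.
    apply transport_bwd_iff in E2; [| specialize (Hcbar_pos x); lra].
    rewrite <- E2. exact D2.
Qed.

Lemma exp_form_is_solution :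
  cexp (phase1 L) = (RtoC (R0 * RL) * cexp (phase2 L))%C ->
  is_solution L cbar a d R0 RL s (fun t => cexp (phase1 t)) (fun t => (RtoC R0 * cexp (phase2 t))%C).
Proof.
  intros Hchar.
  pose proof (fun x => is_derive_cexp _ x _ (is_derive_phase1 x)) as D1.
  pose proof (fun x => is_derive_Cmult (fun _ => RtoC R0) _ x (RtoC 0) _
                (is_derive_const (V:=C_R_NormedModule) _ x)
                (is_derive_cexp _ x _ (is_derive_phase2 x))) as D2.
  split; [| split; [| split; [| split]]].
  - apply ccont_on_0L_of_is_derive. intros x. eexists. apply D1.
  - apply ccont_on_0L_of_is_derive. intros x. eexists. apply D2.
  - intros x Hx. assert (Hc : cbar x <> 0) by (specialize (Hcbar_pos x); lra).
    do 2 eexists. split; [apply D1 |]. split; [apply D2 |].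
    cbv beta. rewrite clamp_id by lra. split.
    + apply transport_fwd_iff; [exact Hc | reflexivity].
    + apply transport_bwd_iff; [exact Hc |]. ring.
  - rewrite phase1_0, phase2_0. ring.
  - rewrite Hchar, RtoC_mult. ring.
Qed.

Lemma nontrivial_solution_iff :
  (exists w1 w2, is_solution L cbar a d R0 RL s w1 w2 /\ nontrivial L w1 w2) <->
  cexp (phase1 L) = (RtoC (R0 * RL) * cexp (phase2 L))%C.
Proof.
  split.
  - intros (w1 & w2 & Hsol & y & Hy & Hnz).
    pose proof (solution_exp_form w1 w2 Hsol) as Hform.
    destruct Hsol as (_ & _ & _ & H0 & HLb).
    assert (Hw10 : w1 0 <> 0).
    { intros E. destruct (Hform y Hy) as [E1 E2]. rewrite H0, E in E2. rewrite E in E1.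
      destruct Hnz as [N | N]; apply N; [rewrite E1 | rewrite E2]; ring. }
    destruct (Hform L) as [E1 E2]; [lra |]. rewrite E1, E2, H0 in HLb.
    replace (cexp (phase1 L)) with (/ w1 0 * (w1 0 * cexp (phase1 L)))%C by (field; exact Hw10).
    rewrite HLb, RtoC_mult. field. exact Hw10.
  - intros Hchar. eexists _, _. split; [apply exp_form_is_solution, Hchar |].
    exists 0. split; [lra |]. left. rewrite phase1_0, cexp_0. intros H. injection H. lra.
Qed.

End BoundaryValueProblem.

Lemma Csub_eq_0_iff (u v : C) : u = v <-> (u - v = 0)%C.
Proof.
  split; intros H.
  - rewrite H. ring.
  - replace u with (u - v + v)%C by ring. rewrite H. ring.
Qed.

Theorem mainTheorem2 (L : R) (cbar a d : R -> R) (R0 RL : R) (lnR : C) (s : C) :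
  0 < L ->
  (forall x, 0 <= x <= L -> 0 < cbar x) ->
  cont_on_0L L cbar -> cont_on_0L L a -> cont_on_0L L d ->
  R0 * RL <> 0 ->
  cexp lnR = RtoC (R0 * RL) ->
  (exists w1 w2 : R -> C, is_solution L cbar a d R0 RL s w1 w2 /\ nontrivial L w1 w2)
  <->
  (exists n : Z,
     s = ((lnR + RtoC (Iw cbar d L) + RtoC (Iw cbar a L)
           + RtoC (2 * PI * IZR n) * Ci) / (RtoC 2 * RtoC (Iw cbar (fun _ => 1) L)))%C).
Proof.
  intros HL Hpos Hcbar Ha Hd _ Hln.
  rewrite (nontrivial_solution_iff L cbar a d R0 RL s HL Hpos Hcbar Ha Hd).
  rewrite <- Hln, <- cexp_add, cexp_eq_cexp.
  unfold phase1, phase2. rewrite !(Iclamp_L L cbar) by lra.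
  assert (HI : RtoC (Iw cbar (fun _ => 1) L) <> 0).
  { pose proof (Iw_1_pos L cbar HL Hpos Hcbar) as HI. intros E. injection E. lra. }
  split; intros [n E]; exists n.
  - apply Csub_eq_0_iff in E.
    field_simplify_eq; [| exact HI]. apply Csub_eq_0_iff. etransitivity; [| exact E]. ring.
  - rewrite E. field. exact HI.
Qed.
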